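(* Let $D$ be an API-domain and $S$ a multiplicatively closed subset of $D$ not containing $0$. Then the localization $D_S$ is an API-domain. If moreover $D$ is quasilocal, then so is $D_S$.
   Context: An API-domain is an integral domain in which for every nonempty subset $\{d_\alpha\}$ of nonzero elements there is a natural number $n$ with the ideal generated by $\{d_\alpha^n\}$ principal. Quasilocal: unique maximal ideal. *)

From HB Require Import structures.
From mathcomp Require Import all_boot all_order all_algebra fraction.
Set Implicit Arguments. Unset Strict Implicit. Unset Printing Implicit Defensive.
Import Order.TTheory GRing.Theory.
Local Open Scope ring_scope.

(* Throughout, a "domain" is a subring A (given as a predicate) of an integral
   domain R. The domain D itself is the full subring (fun _ => True) of D, and
   the localization D_S is the subring {a/s | a in D, s in S} of the
   fraction field {fraction D}. *)

Section Ideals.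
Variable R : idomainType.
Variable A : R -> Prop.

Definition is_ideal (I : R -> Prop) : Prop :=
  (forall x, I x -> A x) /\ I 0 /\
  (forall x y, I x -> I y -> I (x + y)) /\
  (forall a x, A a -> I x -> I (a * x)).

Definition ideal_gen (X : R -> Prop) (y : R) : Prop :=
  exists s : seq (R * R),
    (forall p, p \in s -> A p.1 /\ X p.2) /\ y = \sum_(p <- s) p.1 * p.2.

Definition principal_ideal (g : R) (y : R) : Prop := exists a, A a /\ y = a * g.

Definition is_principal_gen (X : R -> Prop) : Prop :=
  exists g, A g /\ forall y, ideal_gen X y <-> principal_ideal g y.

Definition is_API : Prop :=
  forall X : R -> Prop,
    (forall x, X x -> A x) -> (exists x, X x) -> (forall x, X x -> x != 0) ->
    exists n : nat, (0 < n)%N /\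
      is_principal_gen (fun y => exists x, X x /\ y = x ^+ n).

Definition is_maximal_ideal (I : R -> Prop) : Prop :=
  is_ideal I /\ ~ I 1 /\
  forall J, is_ideal J -> (forall x, I x -> J x) -> J 1 \/ (forall x, J x <-> I x).

Definition quasilocal : Prop :=
  exists I, is_maximal_ideal I /\
    forall J, is_maximal_ideal J -> forall x, J x <-> I x.
End Ideals.

Definition mult_closed (D : idomainType) (S : D -> Prop) : Prop :=
  S 1 /\ (forall a b, S a -> S b -> S (a * b)).

Definition localization (D : idomainType) (S : D -> Prop) : {fraction D} -> Prop :=
  fun x => exists a s, S s /\ x = tofrac a / tofrac s.

(* If the fractions a/s range over a set X of nonzero elements of D_S, their
   numerators form a set Y of nonzero elements of D; when the ideal (Y^n) of D
   is gD, the ideal (X^n) of D_S is g D_S.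
   For quasilocality, apply the API property to {a, b}: (a^n, b^n) = (g) with
   g = al a^n + be b^n, a^n = c g and b^n = d g, so al c + be d = 1 and one of
   al c, be d is a unit of the quasilocal ring D; hence a^n | b^n or b^n | a^n.
   This comparability passes to D_S, and if x^n is a multiple of y then so is
   (x + y)^n, so a sum of two nonunits of D_S is a nonunit: the nonunits form
   the unique maximal ideal of D_S. *)

From HB Require Import structures.
From mathcomp Require Import all_boot all_order all_algebra fraction.
From mathcomp Require Import boolp classical_sets ring.
Set Implicit Arguments. Unset Strict Implicit. Unset Printing Implicit Defensive.
Import GRing.Theory.
Local Open Scope classical_set_scope.
Local Open Scope ring_scope.

Record is_subsemiring (R : idomainType) (A : R -> Prop) : Prop := SubSemiring {
  subsemiring0 : A 0;
  subsemiring1 : A 1;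
  subsemiringD : forall x y, A x -> A y -> A (x + y);
  subsemiringM : forall x y, A x -> A y -> A (x * y) }.

Lemma subsemiringT (R : idomainType) : is_subsemiring (fun _ : R => True).
Proof. by []. Qed.

Section SubsemiringIdeals.
Variables (R : idomainType) (A : R -> Prop).
Hypothesis hA : is_subsemiring A.

Lemma subsemiringX x n : A x -> A (x ^+ n).
Proof.
move=> Ax; elim: n => [|n IHn]; first by rewrite expr0; exact: subsemiring1.
by rewrite exprS; exact: subsemiringM.
Qed.

Lemma subsemiring_sum (I : Type) (r : seq I) (P : pred I) (F : I -> R) :
  (forall i, P i -> A (F i)) -> A (\sum_(i <- r | P i) F i).
Proof. by apply: big_ind; [exact: subsemiring0 | exact: subsemiringD]. Qed.

Definition is_unit_in (x : R) : Prop := exists2 y, A y & x * y = 1.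

Lemma ideal_gen_base (X : set R) x : X x -> ideal_gen A X x.
Proof.
move=> Xx; exists [:: (1, x)]; split; last by rewrite big_seq1 mul1r.
by move=> p; rewrite inE => /eqP ->; split => //; exact: subsemiring1.
Qed.

Lemma is_ideal_gen (X : set R) : X `<=` A -> is_ideal A (ideal_gen A X).
Proof.
move=> XA; split; [|split; [|split]].
- move=> _ [s [hs ->]]; rewrite big_seq; apply: subsemiring_sum => p /hs[Ap /XA Xp].
  exact: subsemiringM.
- by exists [::]; rewrite big_nil.
- move=> _ _ [s [hs ->]] [t [ht ->]]; exists (s ++ t); split; last by rewrite big_cat.
  by move=> p; rewrite mem_cat => /orP[/hs|/ht].
- move=> a _ Aa [s [hs ->]]; exists [seq (a * p.1, p.2) | p <- s]; split.
    by move=> _ /mapP[p /hs[Ap Xp] ->]; split => //; exact: subsemiringM.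
  by rewrite big_map big_distrr; apply: eq_bigr => p _; rewrite /= mulrA.
Qed.

Lemma ideal_gen_min (X I : set R) : is_ideal A I -> X `<=` I -> ideal_gen A X `<=` I.
Proof.
move=> [_ [I0 [ID IM]]] XI _ [s [hs ->]]; rewrite big_seq.
by apply: big_ind => // p /hs[Ap /XI Ip]; exact: IM.
Qed.

Lemma is_ideal_principal g : A g -> is_ideal A (principal_ideal A g).
Proof.
move=> Ag; split; [|split; [|split]].
- by move=> _ [a [Aa ->]]; exact: subsemiringM.
- by exists 0; rewrite mul0r; split => //; exact: subsemiring0.
- move=> _ _ [a [Aa ->]] [b [Ab ->]]; exists (a + b).
  by rewrite mulrDl; split=> //; exact: subsemiringD.
- move=> c _ Ac [a [Aa ->]]; exists (c * a).
  by rewrite mulrA; split=> //; exact: subsemiringM.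
Qed.

Lemma principal_ideal_refl g : principal_ideal A g g.
Proof. by exists 1; rewrite mul1r; split => //; exact: subsemiring1. Qed.

Lemma principal_genP (X : set R) : X `<=` A ->
  is_principal_gen A X <->
  exists g, [/\ A g, X `<=` principal_ideal A g & ideal_gen A X g].
Proof.
move=> XA; split=> [[g [Ag hg]] | [g [Ag Xg Gg]]].
  by exists g; split => // [x /ideal_gen_base /hg //|]; apply/hg/principal_ideal_refl.
exists g; split => // y; split; first exact: (ideal_gen_min (is_ideal_principal Ag) Xg).
by case=> a [Aa ->]; have [_ [_ [_ IM]]] := is_ideal_gen XA; exact: IM.
Qed.

Lemma ideal_gen_sub2 a b (X : set R) g : A a -> A b ->
  X `<=` (fun y => y = a \/ y = b) -> ideal_gen A X g ->
  exists al be, [/\ A al, A be & g = al * a + be * b].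
Proof.
pose I y := exists al be, [/\ A al, A be & y = al * a + be * b].
move=> Aa Ab Xab; apply: (ideal_gen_min (I := I)) => [|x /Xab[] ->]; last first.
- exists 0, 1; rewrite mul1r mul0r add0r.
  by split=> //; [exact: subsemiring0 | exact: subsemiring1].
- exists 1, 0; rewrite mul1r mul0r addr0.
  by split=> //; [exact: subsemiring1 | exact: subsemiring0].
split; [|split; [|split]].
- by move=> _ [al [be [Aal Abe ->]]]; apply: (subsemiringD hA); exact: subsemiringM.
- by exists 0, 0; split; rewrite ?mul0r ?addr0 //; exact: subsemiring0.
- move=> _ _ [a1 [b1 [Aa1 Ab1 ->]]] [a2 [b2 [Aa2 Ab2 ->]]].
  by exists (a1 + a2), (b1 + b2); rewrite !mulrDl addrACA; split=> //; exact: subsemiringD.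
- move=> r _ Ar [a1 [b1 [Aa1 Ab1 ->]]]; exists (r * a1), (r * b1).
  by rewrite mulrDr !mulrA; split=> //; exact: subsemiringM.
Qed.

Lemma is_ideal_bigcup_chain (F : set (set R)) :
  F !=set0 -> F `<=` is_ideal A -> total_on F subset ->
  is_ideal A (\bigcup_(X in F) X).
Proof.
move=> [B FB] FI Ftot; split; [|split; [|split]].
- by move=> x [X /FI[XA _] /XA].
- by exists B => //; have [_ []] := FI B FB.
- move=> x y [X FX Xx] [Y FY Yy].
  have [XY|YX] := Ftot X Y FX FY.
  + by exists Y => //; have [_ [_ [YD _]]] := FI Y FY; exact: YD (XY _ Xx) Yy.
  + by exists X => //; have [_ [_ [XD _]]] := FI X FX; exact: XD Xx (YX _ Yy).
- by move=> a x Aa [X FX Xx]; exists X => //; have [_ [_ [_ XM]]] := FI X FX; exact: XM.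
Qed.

Lemma proper_ideal_sub_maximal (I : set R) : is_ideal A I -> ~ I 1 ->
  exists M, is_maximal_ideal A M /\ I `<=` M.
Proof.
move=> Ii I1; pose proper B := [/\ is_ideal A B, ~ B 1 & I `<=` B].
(* [set0] is allowed so that the empty chain has an upper bound *)
have [M [PM Mmax]] : exists M, (proper M \/ M = set0) /\
    forall B, M `<` B -> ~ (proper B \/ B = set0).
  apply: Zorn_bigcup => F FP Ftot.
  pose G := F `&` proper.
  have -> : \bigcup_(X in F) X = \bigcup_(X in G) X.
    apply/seteqP; split=> x [X FX Xx]; exists X => //; last by case: FX.
    by case: (FP X FX) => // X0; rewrite X0 in Xx.
  have [[B GB]|G0] := pselect (G !=set0); [left; split|right].
  - apply: is_ideal_bigcup_chain; [by exists B | by move=> X [_ []] |].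
    by move=> X Y [FX _] [FY _]; exact: Ftot.
  - by case=> X [_ [_ X1 _]].
  - by move=> x Ix; exists B => //; case: GB => _ [_ _ IB]; exact: IB.
  - by apply/seteqP; split=> // x [X GX _]; apply: G0; exists X.
have [Mi M1 IM] : proper M.
  case: PM => // M0; exfalso; apply: (Mmax I); last by left; split.
  rewrite M0; split=> // I0; have [_ [I0' _]] := Ii; exact: I0 _ I0'.
exists M; split=> //; split=> //; split=> // J Ji MJ.
have [J1|J1] := pselect (J 1); [by left | right].
have JM : J `<=` M.
  apply: contrapT => JM; apply: (Mmax J); first by split.
  by left; split=> // x /IM /MJ.
by move=> x; split=> [/JM|/MJ].
Qed.

Lemma unit_notin_proper_ideal (J : set R) x :
  is_ideal A J -> ~ J 1 -> J x -> ~ is_unit_in x.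
Proof.
by move=> [_ [_ [_ JM]]] J1 Jx [y Ay xy1]; apply: J1; rewrite -xy1 mulrC; exact: JM.
Qed.

Lemma nonunit_in_maximal x : A x -> ~ is_unit_in x ->
  exists M, is_maximal_ideal A M /\ M x.
Proof.
move=> Ax nux; have [|M [Mmax xM]] := proper_ideal_sub_maximal (is_ideal_principal Ax).
  by case=> a [Aa ax1]; apply: nux; exists a; rewrite // mulrC -ax1.
by exists M; split=> //; exact/xM/principal_ideal_refl.
Qed.

Lemma quasilocal_nonunitD : quasilocal A ->
  forall x y, A x -> A y -> ~ is_unit_in x -> ~ is_unit_in y -> ~ is_unit_in (x + y).
Proof.
case=> M [[Mi [M1 _]] Muniq] x y Ax Ay nux nuy.
have inM z : A z -> ~ is_unit_in z -> M z.
  by move=> Az /(nonunit_in_maximal Az)[N [Nmax Nz]]; exact/(Muniq N Nmax).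
have [_ [_ [MD _]]] := Mi.
exact: unit_notin_proper_ideal Mi M1 (MD _ _ (inM _ Ax nux) (inM _ Ay nuy)).
Qed.

Lemma nonunitD_quasilocal :
  (forall x y, A x -> A y -> ~ is_unit_in x -> ~ is_unit_in y -> ~ is_unit_in (x + y)) ->
  quasilocal A.
Proof.
move=> nuD; pose M x := A x /\ ~ is_unit_in x.
have proper_subM J : is_ideal A J -> ~ J 1 -> J `<=` M.
  move=> Ji J1 x Jx; split; first by case: Ji => /(_ x Jx).
  exact: unit_notin_proper_ideal Ji J1 Jx.
have Mi : is_ideal A M.
  split; [by move=> x [] | split; [|split]].
  - split; first exact: subsemiring0.
    by case=> y _; rewrite mul0r => /eqP; rewrite eq_sym oner_eq0.
  - by move=> x y [Ax nux] [Ay nuy]; split; [exact: subsemiringD | exact: nuD].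
  - move=> a x Aa [Ax nux]; split; first exact: subsemiringM.
    case=> y Ay axy; apply: nux; exists (a * y); first exact: subsemiringM.
    by rewrite mulrCA mulrA.
have M1 : ~ M 1 by case=> _; apply; exists 1; [exact: subsemiring1 | rewrite mulr1].
have Mmax : is_maximal_ideal A M.
  split; [done | split=> // J Ji MJ].
  have [J1|J1] := pselect (J 1); [by left | right].
  by move=> x; split; [exact: proper_subM | exact: MJ].
exists M; split=> // J [Ji [J1 Jmax]] x.
have [//|JM] := Jmax M Mi (proper_subM J Ji J1).
by split=> /JM.
Qed.

Lemma unit_addrX x y r n : (0 < n)%N -> A x -> A y -> A r ->
  x ^+ n = r * y ^+ n -> is_unit_in (x + y) -> is_unit_in y.
Proof.
case: n => // n _ Ax Ay Ar xr [w Aw xyw].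
have [c Ac xyc] : exists2 c, A c & (x + y) ^+ n.+1 = y * c.
  pose s := \sum_(i < n.+1) (x + y) ^+ (n - i) * x ^+ i.
  have As : A s.
    apply: subsemiring_sum => i _; apply: (subsemiringM hA); apply: subsemiringX => //.
    exact: subsemiringD.
  exists (r * y ^+ n + s).
    by apply: (subsemiringD hA) => //; apply: (subsemiringM hA) => //; exact: subsemiringX.
  have := subrXX (x + y) x n.+1; rewrite addrAC subrr add0r -/s => /eqP.
  by rewrite subr_eq => /eqP ->; rewrite xr exprS mulrDr addrC mulrCA.
exists (c * w ^+ n.+1); first by apply: (subsemiringM hA) => //; exact: subsemiringX.
by rewrite mulrA -xyc -exprMn xyw expr1n.
Qed.

End SubsemiringIdeals.

Lemma API_quasilocal_exprdvd (D : idomainType) :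
  is_API (fun _ : D => True) -> quasilocal (fun _ : D => True) ->
  forall a b : D, a != 0 -> b != 0 ->
  exists2 n, (0 < n)%N & exists e, a ^+ n = e * b ^+ n \/ b ^+ n = e * a ^+ n.
Proof.
move=> hD hq a b a0 b0; pose X c := c = a \/ c = b.
have Xnz c : X c -> c != 0 by case=> ->.
have [n [n0 /(principal_genP (subsemiringT D) (fun _ _ => I))[g [_ Xg Gg]]]] :=
  hD X (fun _ _ => I) (ex_intro _ a (or_introl erefl)) Xnz.
exists n => //.
have [c [_ ac]] : principal_ideal (fun _ => True) g (a ^+ n).
  by apply: Xg; exists a; split=> //; left.
have [d [_ bd]] : principal_ideal (fun _ => True) g (b ^+ n).
  by apply: Xg; exists b; split=> //; right.
have Xn_ab : (fun y => exists x, X x /\ y = x ^+ n) `<=` (fun y => y = a ^+ n \/ y = b ^+ n).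
  by move=> _ [x [[->|->] ->]]; [left | right].
have [al [be [_ _ g_comb]]] := ideal_gen_sub2 (subsemiringT D) I I Xn_ab Gg.
have g0 : g != 0 by apply: contraNneq (expf_neq0 n a0) => g0; rewrite ac g0 mulr0.
have comb1 : al * c + be * d = 1.
  by apply: (mulIf g0); rewrite mulrDl -!mulrA -ac -bd mul1r g_comb.
have [[u _ u1]|nu1] := pselect (is_unit_in (fun _ => True) (al * c)).
  by exists (d * al * u); right; rewrite ac bd; ring: u1.
have [[u _ u2]|nu2] := pselect (is_unit_in (fun _ => True) (be * d)).
  by exists (c * be * u); left; rewrite ac bd; ring: u2.
exfalso; apply: (quasilocal_nonunitD (subsemiringT D) hq I I nu1 nu2).
by exists 1; rewrite // comb1 mulr1.
Qed.

Section Localization.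
Variables (D : idomainType) (S : D -> Prop).
Hypotheses (hS : mult_closed S) (hS0 : ~ S 0).
Local Notation L := (localization S).
Local Notation tf := (@tofrac D).

Lemma mult_closedX s n : S s -> S (s ^+ n).
Proof.
case: hS => S1 SM Ss; elim: n => [|n IHn]; first by rewrite expr0.
by rewrite exprS; exact: SM.
Qed.

Lemma tofrac_S_neq0 s : S s -> tf s != 0.
Proof. by move=> Ss; rewrite tofrac_eq0; apply/eqP => s0; apply: hS0; rewrite -s0. Qed.

Lemma localization_tofrac a : L (tf a).
Proof. by exists a, 1; split; [case: hS | rewrite tofrac1 divr1]. Qed.

Lemma subsemiring_localization : is_subsemiring L.
Proof.
split; [by rewrite -tofrac0; exact: localization_tofrac
       | by rewrite -tofrac1; exact: localization_tofrac | |].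
- move=> _ _ [a [s [Ss ->]]] [b [t [St ->]]]; exists (a * t + b * s), (s * t).
  split; first by case: hS => _; apply.
  by rewrite tofracD !tofracM addf_div ?tofrac_S_neq0.
- move=> _ _ [a [s [Ss ->]]] [b [t [St ->]]]; exists (a * b), (s * t).
  by split; [case: hS => _; apply | rewrite !tofracM mulf_div].
Qed.

Lemma is_ideal_tofrac_preim (J : set {fraction D}) :
  is_ideal L J -> is_ideal (fun _ : D => True) (fun a => J (tf a)).
Proof.
move=> [_ [J0 [JD JM]]]; split; [done | split; [|split]].
- by rewrite tofrac0.
- by move=> a b Ja Jb; rewrite tofracD; exact: JD.
- by move=> a b _ Jb; rewrite tofracM; exact: JM (localization_tofrac a) Jb.
Qed.

Lemma localization_API : is_API (fun _ : D => True) -> is_API L.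
Proof.
move=> hD X XL [x0 Xx0] Xnz.
pose Y a := exists s, S s /\ X (tf a / tf s).
have Yx0 : exists a, Y a.
  by have [a [s [Ss x0E]]] := XL x0 Xx0; exists a, s; rewrite -x0E.
have Ynz a : Y a -> a != 0.
  by move=> [s [_ Xa]]; apply: contraTneq (Xnz _ Xa) => ->; rewrite tofrac0 mul0r eqxx.
have [n [n0 /(principal_genP (subsemiringT D) (fun _ _ => I))[g [_ Yg Gg]]]] :=
  hD Y (fun _ _ => I) Yx0 Ynz.
pose Xn y := exists x, X x /\ y = x ^+ n.
have XnL : Xn `<=` L.
  by move=> _ [x [/XL Lx ->]]; exact: subsemiringX subsemiring_localization _ _ Lx.
exists n; split=> //; apply/(principal_genP subsemiring_localization XnL).
exists (tf g); split; first exact: localization_tofrac.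
  move=> _ [x [Xx ->]]; have [a [s [Ss xE]]] := XL x Xx.
  have [d [_ ad]] : principal_ideal (fun _ => True) g (a ^+ n).
    by apply: Yg; exists a; split=> //; exists s; rewrite -xE.
  exists (tf d / tf (s ^+ n)); split.
    by exists d, (s ^+ n); split=> //; exact: mult_closedX.
  by rewrite xE expr_div_n -!tofracXn ad tofracM mulrAC.
apply: (ideal_gen_min (I := fun a => ideal_gen L Xn (tf a)) _ _ Gg).
  exact/is_ideal_tofrac_preim/(is_ideal_gen subsemiring_localization XnL).
move=> _ [a [[s [Ss Xa]] ->]].
have [_ [_ [_ GM]]] := is_ideal_gen subsemiring_localization XnL.
have -> : tf (a ^+ n) = tf (s ^+ n) * (tf a / tf s) ^+ n.
  by rewrite expr_div_n -!tofracXn mulrC divfK // tofrac_S_neq0 //; exact: mult_closedX.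
apply: GM; first exact: localization_tofrac.
by apply: (ideal_gen_base subsemiring_localization); exists (tf a / tf s).
Qed.

Lemma localization_exprdvd a b s t n e : S s -> S t -> a ^+ n = e * b ^+ n ->
  exists2 r, L r & (tf a / tf s) ^+ n = r * (tf b / tf t) ^+ n.
Proof.
move=> Ss St ab; exists (tf (e * t ^+ n) / tf (s ^+ n)).
  by exists (e * t ^+ n), (s ^+ n); split=> //; exact: mult_closedX.
have /(congr1 tf) := ab; rewrite tofracM !tofracXn !expr_div_n => ->.
rewrite tofracM !tofracXn.
have := tofrac_S_neq0 (mult_closedX n St); rewrite tofracXn.
move: (tf e) (tf b ^+ n) (tf s ^+ n) (tf t ^+ n) => E B U T T0.
by rewrite mulf_div -[E * T * B]mulrA [T * B]mulrC mulrA -mulf_div divff ?mulr1.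
Qed.

Lemma localization_nonunitD :
  is_API (fun _ : D => True) -> quasilocal (fun _ : D => True) ->
  forall x y, L x -> L y -> ~ is_unit_in L x -> ~ is_unit_in L y ->
  ~ is_unit_in L (x + y).
Proof.
move=> hD hq x y Lx Ly nux nuy.
have [->|x0] := eqVneq x 0; first by rewrite add0r.
have [->|y0] := eqVneq y 0; first by rewrite addr0.
have [a [s [Ss xE]]] := Lx; have [b [t [St yE]]] := Ly.
have a0 : a != 0 by apply: contraNneq x0 => a0; rewrite xE a0 tofrac0 mul0r.
have b0 : b != 0 by apply: contraNneq y0 => b0; rewrite yE b0 tofrac0 mul0r.
have [n n0 [e [ab|ba]]] := API_quasilocal_exprdvd hD hq a0 b0.
- have [r Lr xr] := localization_exprdvd Ss St ab; rewrite -xE -yE in xr.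
  by move/(unit_addrX subsemiring_localization n0 Lx Ly Lr xr).
- have [r Lr yr] := localization_exprdvd St Ss ba; rewrite -xE -yE in yr.
  by rewrite addrC => /(unit_addrX subsemiring_localization n0 Ly Lx Lr yr).
Qed.

End Localization.

Theorem theorem4 (D : idomainType) (S : D -> Prop)
  (hS : mult_closed S) (hS0 : ~ S 0)
  (hD : is_API (fun _ : D => True)) :
  is_API (localization S) /\
  (quasilocal (fun _ : D => True) -> quasilocal (localization S)).
Proof.
split; first exact: localization_API.
move=> hq; apply: nonunitD_quasilocal (subsemiring_localization hS hS0) _.
exact: localization_nonunitD.
Qed.
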